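(* Let $A$ be a wqo such that $\mathbf{w}(A)\ge\omega$ is additively indecomposable. Then $A$ has a substructure $C$ with $\mathbf{w}(C)=\mathbf{w}(A)$ which is transferable.
   Context: A wqo is a quasi-order in which every infinite sequence $x_0,x_1,\dots$ has $i<j$ with $x_i\le x_j$. $\mathbf{w}(A)$ (width) is the rank of the root of the well-founded tree of finite sequences of pairwise incomparable elements of $A$ (root: empty sequence, children: one-element extensions; rank $r(s)=\sup\{r(t)+1: t\text{ child of } s\}$). An ordinal is additively indecomposable if it is of the form $\omega^\gamma$. A substructure is a subset with the restricted ordering. A wqo $C$ is transferable if for every finite set $\{x_1,\dots,x_n\}\subseteq C$, the substructure $\{y\in C : y\not\le x_i \text{ for all } i\}$ has width $\mathbf{w}(C)$. *)

From Stdlib Require Import List Arith.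
Import ListNotations.

(** * Ordinals
   [osup Ia f] denotes the STRICT supremum  sup_{i : I} (f i + 1),
   i.e. the least ordinal strictly above every [f i].  In particular
   [osup Empty_set _] is 0, and the rank of a tree node,
   r(s) = sup { r(t)+1 : t child of s }, is literally [osup children r]. *)
Inductive Ord : Type :=
  | osup : forall I : Type, (I -> Ord) -> Ord.

Fixpoint ole (a b : Ord) {struct a} : Prop :=
  match a, b with
  | osup Ia f, osup Jb g => forall i : Ia, exists j : Jb, ole (f i) (g j)
  end.

Definition olt (a b : Ord) : Prop :=
  match b with osup Jb g => exists j : Jb, ole a (g j) end.

Definition oeq (a b : Ord) : Prop := ole a b /\ ole b a.

Definition ozero : Ord := osup Empty_set (fun e => match e with end).

Fixpoint ofin (n : nat) : Ord :=
  match n with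
  | 0 => ozero
  | S m => osup unit (fun _ => ofin m)
  end.

Definition oomega : Ord := osup nat ofin.

(* ordinal addition a + b, by recursion on b:
   a + 0 = a,  a + sup_j (g j + 1) = sup_j ((a + g j) + 1) *)
Fixpoint oadd (a b : Ord) {struct b} : Ord :=
  match b with
  | osup Jb g =>
      match a with
      | osup Ia f =>
          osup (Ia + Jb)%type
            (fun k => match k with
                      | inl i => f i
                      | inr j => oadd a (g j)
                      end)
      end
  end.

Fixpoint omulnat (a : Ord) (n : nat) : Ord :=
  match n with
  | 0 => ozero
  | S m => oadd (omulnat a m) a
  end.

(* omega ^ b, by recursion on b:
   omega^0 = 1,  omega^(sup_j (g j + 1)) = sup_{j,n} (omega^(g j) * n + 1) (and >= 1) *)
Fixpoint opow (b : Ord) : Ord :=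
  match b with
  | osup Jb g =>
      osup (unit + (Jb * nat))%type
        (fun k => match k with
                  | inl _ => ozero
                  | inr (j, n) => omulnat (opow (g j)) n
                  end)
  end.

Definition add_indecomposable (a : Ord) : Prop :=
  exists g : Ord, oeq a (opow g).

Definition quasi_order {A : Type} (le : A -> A -> Prop) : Prop :=
  (forall x, le x x) /\ (forall x y z, le x y -> le y z -> le x z).

Definition wqo {A : Type} (le : A -> A -> Prop) : Prop :=
  quasi_order le /\
  forall f : nat -> A, exists i j, i < j /\ le (f i) (f j).

Definition antichain_seq {A : Type} (le : A -> A -> Prop) (s : list A) : Prop :=
  forall (i j : nat) (x y : A), i <> j ->
    nth_error s i = Some x -> nth_error s j = Some y -> ~ le x y.

Definition children {A : Type} (le : A -> A -> Prop) (s : list A) : Type :=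
  { t : list A | antichain_seq le t /\ exists x : A, t = s ++ [x] }.

Definition is_rank_fn {A : Type} (le : A -> A -> Prop) (rho : list A -> Ord) : Prop :=
  forall s : list A, antichain_seq le s ->
    oeq (rho s) (osup (children le s) (fun t => rho (proj1_sig t))).

(* w(A) = a : the rank of the root (empty sequence) is a.
   (A rank function exists iff the tree is well-founded, and is then unique
   up to [oeq].) *)
Definition has_width {A : Type} (le : A -> A -> Prop) (a : Ord) : Prop :=
  exists rho : list A -> Ord, is_rank_fn le rho /\ oeq (rho []) a.

Definition sub_le {A : Type} (le : A -> A -> Prop) (C : A -> Prop) :
  {x : A | C x} -> {x : A | C x} -> Prop :=
  fun x y => le (proj1_sig x) (proj1_sig y).

Definition transferable {A : Type} (le : A -> A -> Prop) (C : A -> Prop) : Prop :=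
  exists wC : Ord, has_width (sub_le le C) wC /\
    forall xs : list A, (forall x, In x xs -> C x) ->
      has_width (sub_le le (fun y => C y /\ forall x, In x xs -> ~ le y x)) wC.

(* Since [wA = omega ^ g >= omega], ordinals below [wA] are closed under the
   natural sum, and the width of a union is at most the natural sum of the
   widths.  Call [x] small when its downset has width [< wA].  If every element
   is small take [C = A]; otherwise take [m] minimal (the strict order of a wqo
   is well-founded) with a large downset and let [C] be its strict downset: the
   rest of the downset of [m] is a chain, so [C] still has width [wA], and its
   elements are small by minimality.  Finally, [C] is covered by its part
   avoiding [x_1, ..., x_n] and by finitely many small downsets, so that part
   cannot have width [< wA]. *)

From Stdlib Require Import List Arith Lia Wellfounded.
From Stdlib Require Import Classical ClassicalEpsilon FunctionalExtensionality.
Import ListNotations.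

Lemma ole_refl (a : Ord) : ole a a.
Proof. induction a as [I f IH]; intros i; exists i; apply IH. Qed.

Lemma ole_trans (a b c : Ord) : ole a b -> ole b c -> ole a c.
Proof.
  revert b c; induction a as [I f IH]; intros [J g] [K h] Hab Hbc i.
  destruct (Hab i) as [j Hj]; destruct (Hbc j) as [k Hk].
  exists k; eauto.
Qed.

Lemma olt_osup_le (a : Ord) (J : Type) (g : J -> Ord) (j : J) :
  ole a (g j) -> olt a (osup J g).
Proof. now exists j. Qed.

Lemma olt_osup (I : Type) (f : I -> Ord) (i : I) : olt (f i) (osup I f).
Proof. apply (olt_osup_le _ _ _ i), ole_refl. Qed.

Lemma osup_least (I : Type) (f : I -> Ord) (c : Ord) :
  (forall i, olt (f i) c) -> ole (osup I f) c.
Proof. destruct c; intros H i; apply H. Qed.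

Lemma oltW (a b : Ord) : olt a b -> ole a b.
Proof.
  revert b; induction a as [I f IH]; intros [J g] [j Hj] i.
  exists j; apply IH.
  destruct (g j) as [K h]; destruct (Hj i) as [k Hk].
  now exists k.
Qed.

Lemma ole_olt_trans (a b c : Ord) : ole a b -> olt b c -> olt a c.
Proof. destruct c as [K h]; intros Hab [k Hk]; exists k; eapply ole_trans; eauto. Qed.

Lemma olt_ole_trans (a b c : Ord) : olt a b -> ole b c -> olt a c.
Proof.
  destruct b as [J g], c as [K h]; intros [j Hj] Hbc.
  destruct (Hbc j) as [k Hk]; exists k; eapply ole_trans; eauto.
Qed.

Lemma olt_trans (a b c : Ord) : olt a b -> olt b c -> olt a c.
Proof. intros Hab; apply ole_olt_trans, oltW, Hab. Qed.

Lemma olt_wf : well_founded olt.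
Proof.
  enough (H : forall a b, ole b a -> Acc olt b) by (intros a; apply (H a), ole_refl).
  induction a as [I f IH]; intros b Hb; constructor; intros c Hc.
  destruct (olt_ole_trans _ _ _ Hc Hb) as [i Hi]; eauto.
Qed.

Lemma olt_irrefl (a : Ord) : ~ olt a a.
Proof. induction (olt_wf a) as [a _ IH]; intros H; exact (IH a H H). Qed.

Lemma ole_or_olt (a b : Ord) : ole a b \/ olt b a.
Proof.
  revert b; induction a as [I f IH]; intros [J g].
  destruct (classic (forall i, exists j, ole (f i) (g j))) as [H|H]; [now left|right].
  apply not_all_ex_not in H as [i Hi]; exists i.
  destruct (f i) as [K h] eqn:E; intros j.
  destruct (IH i (g j)) as [H|H]; [|now rewrite E in H].
  exfalso; apply Hi; exists j; now rewrite <- E.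
Qed.

Lemma oeq_trans (a b c : Ord) : oeq a b -> oeq b c -> oeq a c.
Proof. intros [H1 H2] [H3 H4]; split; eapply ole_trans; eauto. Qed.

Lemma oeq_sym (a b : Ord) : oeq a b -> oeq b a.
Proof. now intros [H1 H2]. Qed.

Lemma olt_ozero (a : Ord) : ~ olt a ozero.
Proof. now intros [[] _]. Qed.

Fixpoint nsum (a b : Ord) {struct a} : Ord :=
  match a with
  | osup Ia f =>
    (fix nsum_a (b : Ord) : Ord :=
       match b with
       | osup Jb g => osup (Ia + Jb)%type (fun k => match k with
                                          | inl i => nsum (f i) (osup Jb g)
                                          | inr j => nsum_a (g j) end)
       end) b
  end.

Lemma nsum_osup (I J : Type) (f : I -> Ord) (g : J -> Ord) :
  nsum (osup I f) (osup J g) =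
  osup (I + J)%type (fun k => match k with
                              | inl i => nsum (f i) (osup J g)
                              | inr j => nsum (osup I f) (g j) end).
Proof. reflexivity. Qed.

Lemma nsum_least (a b c : Ord) :
  (forall a', olt a' a -> olt (nsum a' b) c) ->
  (forall b', olt b' b -> olt (nsum a b') c) ->
  ole (nsum a b) c.
Proof.
  destruct a as [I f], b as [J g]; intros Ha Hb.
  rewrite nsum_osup; apply osup_least; intros [i|j].
  - apply Ha, olt_osup.
  - apply Hb, olt_osup.
Qed.

Lemma nsum_mono (a a' b b' : Ord) : ole a a' -> ole b b' -> ole (nsum a b) (nsum a' b').
Proof.
  revert a' b b'; induction a as [I f IHa]; intros a' b.
  revert a'; induction b as [J g IHb]; intros [I' f'] [J' g'] Ha Hb.
  rewrite !nsum_osup; intros [i|j].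
  - destruct (Ha i) as [i' Hi']; exists (inl i'); apply IHa; auto.
  - destruct (Hb j) as [j' Hj']; exists (inr j'); apply IHb; auto.
Qed.

Lemma nsum_olt_l (a a' b : Ord) : olt a' a -> olt (nsum a' b) (nsum a b).
Proof.
  destruct a as [I f], b as [J g]; intros [i Hi].
  rewrite nsum_osup; apply (olt_osup_le _ _ _ (inl i)).
  apply nsum_mono; auto using ole_refl.
Qed.

Lemma nsum_olt_r (a b b' : Ord) : olt b' b -> olt (nsum a b') (nsum a b).
Proof.
  destruct a as [I f], b as [J g]; intros [j Hj].
  rewrite nsum_osup; apply (olt_osup_le _ _ _ (inr j)).
  apply nsum_mono; auto using ole_refl.
Qed.

Lemma nsum_ozero : ole (nsum ozero ozero) ozero.
Proof. apply nsum_least; intros x Hx; exfalso; exact (olt_ozero _ Hx). Qed.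

Definition nsum_closed (d : Ord) : Prop :=
  forall a b, olt a d -> olt b d -> olt (nsum a b) d.

Lemma nsum_closed_oeq (a b : Ord) : nsum_closed a -> oeq a b -> nsum_closed b.
Proof.
  intros Ha [Hab Hba] x y Hx Hy; eapply olt_ole_trans; [|exact Hab].
  apply Ha; eapply olt_ole_trans; eauto.
Qed.

Lemma oadd_osup (I J : Type) (f : I -> Ord) (g : J -> Ord) :
  oadd (osup I f) (osup J g) =
  osup (I + J)%type (fun k => match k with
                              | inl i => f i
                              | inr j => oadd (osup I f) (g j) end).
Proof. reflexivity. Qed.

Lemma oadd_mono (a a' b b' : Ord) : ole a a' -> ole b b' -> ole (oadd a b) (oadd a' b').
Proof.
  revert a a' b'; induction b as [J g IHb]; intros [I f] [I' f'] [J' g'] Ha Hb.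
  rewrite !oadd_osup; intros [i|j].
  - destruct (Ha i) as [i' Hi']; now exists (inl i').
  - destruct (Hb j) as [j' Hj']; exists (inr j'); apply IHb; auto.
Qed.

Lemma ole_oaddr (a b : Ord) : ole a (oadd a b).
Proof. destruct a as [I f], b as [J g]; intros i; exists (inl i); apply ole_refl. Qed.

Lemma oadd_olt_r (a b b' : Ord) : olt b' b -> olt (oadd a b') (oadd a b).
Proof.
  destruct a as [I f], b as [J g]; intros [j Hj].
  rewrite oadd_osup; apply (olt_osup_le _ _ _ (inr j)).
  apply oadd_mono; auto using ole_refl.
Qed.

Lemma oadd_ozero (a : Ord) : ole (oadd a ozero) a.
Proof. destruct a as [I f]; intros [i|[]]; exists i; apply ole_refl. Qed.

Lemma olt_oadd_osup (a : Ord) (K : Type) (h : K -> Ord) (c : Ord) :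
  olt c (oadd a (osup K h)) -> olt c a \/ exists k, ole c (oadd a (h k)).
Proof.
  destruct a as [I f]; intros [[i|k] H].
  - left; now apply (olt_osup_le _ _ _ i).
  - right; now exists k.
Qed.

Lemma omulnat_mono (a a' : Ord) (n : nat) : ole a a' -> ole (omulnat a n) (omulnat a' n).
Proof. intros H; induction n; [apply ole_refl|now apply oadd_mono]. Qed.

Lemma omulnat_mono_nat (a : Ord) (n m : nat) : n <= m -> ole (omulnat a n) (omulnat a m).
Proof.
  induction 1; [apply ole_refl|].
  eapply ole_trans; [eassumption|apply ole_oaddr].
Qed.

Lemma olt_omulnat (d : Ord) (n : nat) (c : Ord) :
  olt c (omulnat d n) -> exists k e, k < n /\ olt e d /\ ole c (oadd (omulnat d k) e).
Proof.
  revert c; induction n as [|n IHn]; intros c Hc; [exfalso; exact (olt_ozero _ Hc)|].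
  change (olt c (oadd (omulnat d n) d)) in Hc; destruct d as [K h].
  apply olt_oadd_osup in Hc as [Hc|[k Hk]].
  - destruct (IHn c Hc) as (k & e & Hkn & He & Hce); exists k, e; auto with arith.
  - exists n, (h k); auto using olt_osup.
Qed.

Section MultiplesOfClosed.

Variable d : Ord.
Hypothesis d_closed : nsum_closed d.

(* Induction on [(n, e1)] and [(m, e2)]: an option [d * k + e'] below [d * n + e1]
   with [k < n] is absorbed because [e' + e2 < d] keeps it below [d * (k + m + 1)]. *)
Lemma nsum_omulnat_oadd (n m : nat) (e1 e2 : Ord) : olt e1 d -> olt e2 d ->
  ole (nsum (oadd (omulnat d n) e1) (oadd (omulnat d m) e2))
      (oadd (omulnat d (n + m)) (nsum e1 e2)).
Proof.
  revert m e1 e2; induction n as [n IHn] using lt_wf_ind.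
  intros m e1; revert m; induction e1 as [K h IHe1]; intros m.
  induction m as [m IHm] using lt_wf_ind; intros e2.
  induction e2 as [K2 h2 IHe2]; intros He1 He2.
  apply nsum_least.
  - intros a' Ha'; apply olt_oadd_osup in Ha' as [Ha'|[k Hk]].
    + destruct (olt_omulnat _ _ _ Ha') as (k & e' & Hkn & He' & Ha'k).
      eapply ole_olt_trans; [apply nsum_mono; [exact Ha'k|apply ole_refl]|].
      eapply ole_olt_trans; [apply IHn; auto|].
      eapply olt_ole_trans; [apply oadd_olt_r, d_closed; eauto|].
      eapply ole_trans; [apply (omulnat_mono_nat d (S (k + m)) (n + m)); lia|apply ole_oaddr].
    + assert (olt (h k) d) by (eapply olt_trans; [apply olt_osup|exact He1]).
      eapply ole_olt_trans; [apply nsum_mono; [exact Hk|apply ole_refl]|].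
      eapply ole_olt_trans; [apply IHe1; auto|].
      apply oadd_olt_r, nsum_olt_l, olt_osup.
  - intros b' Hb'; apply olt_oadd_osup in Hb' as [Hb'|[k Hk]].
    + destruct (olt_omulnat _ _ _ Hb') as (k & e' & Hkm & He' & Hb'k).
      eapply ole_olt_trans; [apply nsum_mono; [apply ole_refl|exact Hb'k]|].
      eapply ole_olt_trans; [apply IHm; auto|].
      eapply olt_ole_trans; [apply oadd_olt_r, d_closed; eauto|].
      eapply ole_trans; [apply (omulnat_mono_nat d (S (n + k)) (n + m)); lia|apply ole_oaddr].
    + assert (olt (h2 k) d) by (eapply olt_trans; [apply olt_osup|exact He2]).
      eapply ole_olt_trans; [apply nsum_mono; [apply ole_refl|exact Hk]|].
      eapply ole_olt_trans; [apply IHe2; auto|].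
      apply oadd_olt_r, nsum_olt_r, olt_osup.
Qed.

Lemma nsum_omulnat (n m : nat) : olt ozero d ->
  ole (nsum (omulnat d n) (omulnat d m)) (omulnat d (n + m)).
Proof.
  intros Hd.
  eapply ole_trans; [apply nsum_mono; apply ole_oaddr|].
  eapply ole_trans; [apply (nsum_omulnat_oadd n m ozero ozero Hd Hd)|].
  eapply ole_trans; [apply oadd_mono; [apply ole_refl|apply nsum_ozero]|].
  apply oadd_ozero.
Qed.

End MultiplesOfClosed.

Lemma opow_mono (a b : Ord) : ole a b -> ole (opow a) (opow b).
Proof.
  revert b; induction a as [I f IH]; intros [J g] H [u|[i n]].
  - exists (inl tt); apply ole_refl.
  - destruct (H i) as [j Hj]; exists (inr (j, n)); auto using omulnat_mono.
Qed.

Lemma ozero_olt_opow (b : Ord) : olt ozero (opow b).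
Proof. destruct b; apply (olt_osup_le _ _ _ (inl tt)), ole_refl. Qed.

Lemma olt_opow_osup (J : Type) (g : J -> Ord) (a : Ord) : olt a (opow (osup J g)) ->
  ole a ozero \/ exists j n, ole a (omulnat (opow (g j)) n).
Proof. intros [[u|[j n]] H]; [now left|right; eauto]. Qed.

Lemma opow_nsum_closed (b : Ord) : nsum_closed (opow b).
Proof.
  induction b as [J g IH]; intros a c Ha Hc.
  assert (Hmul : forall j n m, ole a (omulnat (opow (g j)) n) ->
            ole c (omulnat (opow (g j)) m) -> olt (nsum a c) (opow (osup J g))).
  { intros j n m Han Hcm.
    apply (ole_olt_trans _ (omulnat (opow (g j)) (n + m))).
    - eapply ole_trans; [apply nsum_mono; eassumption|].
      apply nsum_omulnat; [apply IH|apply ozero_olt_opow].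
    - apply (olt_osup_le _ _ _ (inr (j, n + m))), ole_refl. }
  apply olt_opow_osup in Ha as [Ha|(j & n & Ha)];
    apply olt_opow_osup in Hc as [Hc|(k & m & Hc)].
  - eapply ole_olt_trans; [apply nsum_mono; eassumption|].
    eapply ole_olt_trans; [apply nsum_ozero|apply ozero_olt_opow].
  - apply (Hmul k 0 m); auto.
  - apply (Hmul j n 0); auto.
  - destruct (ole_or_olt (g j) (g k)) as [H|H].
    + apply (Hmul k n m); auto.
      eapply ole_trans; [exact Ha|apply omulnat_mono, opow_mono, H].
    + apply (Hmul j n m); auto.
      eapply ole_trans; [exact Hc|apply omulnat_mono, opow_mono, oltW, H].
Qed.

Definition is_child {T : Type} (le : T -> T -> Prop) (t s : list T) : Prop :=
  antichain_seq le t /\ exists x, t = s ++ [x].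

Lemma antichain_seq_app_l {T : Type} (le : T -> T -> Prop) (s t : list T) :
  antichain_seq le (s ++ t) -> antichain_seq le s.
Proof.
  intros H i j x y Hij Hi Hj.
  apply (H i j); auto; rewrite nth_error_app1; auto;
    apply nth_error_Some; congruence.
Qed.

Lemma antichain_seq_cons_inv {T : Type} (le : T -> T -> Prop) (a : T) (l : list T) :
  antichain_seq le (a :: l) ->
  antichain_seq le l /\ (forall y, In y l -> ~ le a y /\ ~ le y a).
Proof.
  intros H; split.
  - intros i j x y Hij Hi Hj; apply (H (S i) (S j)); auto.
  - intros y Hy; apply In_nth_error in Hy as [n Hn].
    split; [apply (H 0 (S n))|apply (H (S n) 0)]; auto.
Qed.

Lemma antichain_seq_cons {T : Type} (le : T -> T -> Prop) (a : T) (l : list T) :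
  antichain_seq le l -> (forall y, In y l -> ~ le a y /\ ~ le y a) ->
  antichain_seq le (a :: l).
Proof.
  intros Hl Ha [|i] [|j] x y Hij Hi Hj; simpl in *.
  - congruence.
  - injection Hi as <-; apply (Ha y); eapply nth_error_In; eauto.
  - injection Hj as <-; apply (Ha x); eapply nth_error_In; eauto.
  - apply (Hl i j); auto.
Qed.

Lemma antichain_seq_nil {T : Type} (le : T -> T -> Prop) : antichain_seq le [].
Proof. intros [|] [|]; discriminate. Qed.

Section RankFunctions.

Variables (T : Type) (le : T -> T -> Prop) (r : list T -> Ord).
Hypothesis r_rank : is_rank_fn le r.

Lemma rank_olt_child (s : list T) (x : T) :
  antichain_seq le (s ++ [x]) -> olt (r (s ++ [x])) (r s).
Proof.
  intros Hsx; destruct (r_rank s (antichain_seq_app_l _ _ _ Hsx)) as [_ Hge].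
  eapply olt_ole_trans; [|exact Hge].
  apply (olt_osup_le _ _ (fun t : children le s => r (proj1_sig t))
           (exist _ (s ++ [x]) (conj Hsx (ex_intro _ x eq_refl)))), ole_refl.
Qed.

Lemma rank_le_decreasing (B : list T -> Ord) :
  (forall s x, antichain_seq le (s ++ [x]) -> olt (B (s ++ [x])) (B s)) ->
  forall s, antichain_seq le s -> ole (r s) (B s).
Proof.
  intros HB.
  enough (H : forall o s, ole (r s) o -> antichain_seq le s -> ole (r s) (B s))
    by (intros s; apply (H (r s)), ole_refl).
  induction o as [I f IH]; intros s Hso Hs.
  eapply ole_trans; [apply (r_rank s Hs)|].
  apply osup_least; intros [t [Ht [x ->]]]; simpl.
  destruct (olt_ole_trans _ _ _ (rank_olt_child _ _ Ht) Hso) as [i Hi].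
  eapply ole_olt_trans; [apply (IH i); auto|auto].
Qed.

Lemma rank_acc (s : list T) : Acc (is_child le) s.
Proof.
  enough (H : forall o s, ole (r s) o -> Acc (is_child le) s)
    by apply (H (r s)), ole_refl.
  induction o as [I f IH]; intros t Hto; constructor; intros u [Hu [x ->]].
  destruct (olt_ole_trans _ _ _ (rank_olt_child _ _ Hu) Hto) as [i Hi]; eauto.
Qed.

End RankFunctions.

Lemma acc_rank_exists {T : Type} (le : T -> T -> Prop) :
  (forall s, Acc (is_child le) s) -> exists r, is_rank_fn le r.
Proof.
  intros Hwf.
  set (F := fun (s : list T) (rec : forall t, is_child le t s -> Ord) =>
              osup (children le s) (fun t => rec (proj1_sig t) (proj2_sig t))).
  exists (Fix (R := is_child le) Hwf (fun _ => Ord) F); intros s _.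
  rewrite Fix_eq; [split; apply ole_refl|].
  intros x f g Hfg; unfold F; f_equal; apply functional_extensionality; auto.
Qed.

Lemma has_width_acc {T : Type} (le : T -> T -> Prop) (w : Ord) :
  has_width le w -> forall s, Acc (is_child le) s.
Proof. intros [r [Hr _]]; exact (rank_acc _ _ _ Hr). Qed.

Fixpoint sub_filter {A : Type} (P : A -> Prop) (l : list A) : list {x | P x} :=
  match l with
  | [] => []
  | a :: l' => match excluded_middle_informative (P a) with
               | left h => exist P a h :: sub_filter P l'
               | right _ => sub_filter P l'
               end
  end.

Lemma sub_filter_app {A : Type} (P : A -> Prop) (l1 l2 : list A) :
  sub_filter P (l1 ++ l2) = sub_filter P l1 ++ sub_filter P l2.
Proof.
  induction l1 as [|a l IH]; simpl; auto.
  destruct (excluded_middle_informative (P a)); simpl; now rewrite IH.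
Qed.

Lemma sub_filter_in {A : Type} (P : A -> Prop) (a : A) :
  P a -> exists h, sub_filter P [a] = [exist P a h].
Proof. simpl; destruct (excluded_middle_informative (P a)); eauto; contradiction. Qed.

Lemma sub_filter_out {A : Type} (P : A -> Prop) (a : A) : ~ P a -> sub_filter P [a] = [].
Proof. simpl; destruct (excluded_middle_informative (P a)); auto; contradiction. Qed.

Lemma in_sub_filter {A : Type} (P : A -> Prop) (l : list A) (y : A) :
  In y (map (@proj1_sig _ _) (sub_filter P l)) -> In y l.
Proof.
  induction l as [|a l IH]; simpl; auto.
  destruct (excluded_middle_informative (P a)); simpl; intuition.
Qed.

Lemma antichain_seq_sub_proj {A : Type} (le : A -> A -> Prop) (P : A -> Prop)
  (s : list {x | P x}) :
  antichain_seq (sub_le le P) s <-> antichain_seq le (map (@proj1_sig _ _) s).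
Proof.
  split; intros H i j x y Hij Hi Hj Hxy.
  - rewrite nth_error_map in Hi, Hj.
    destruct (nth_error s i) as [x'|] eqn:Ei; [|discriminate].
    destruct (nth_error s j) as [y'|] eqn:Ej; [|discriminate].
    injection Hi as <-; injection Hj as <-; exact (H i j x' y' Hij Ei Ej Hxy).
  - apply (H i j (proj1_sig x) (proj1_sig y)); auto;
      rewrite nth_error_map; [rewrite Hi|rewrite Hj]; reflexivity.
Qed.

Lemma antichain_seq_sub_filter {A : Type} (le : A -> A -> Prop) (P : A -> Prop) (l : list A) :
  antichain_seq le l -> antichain_seq (sub_le le P) (sub_filter P l).
Proof.
  intros Hl; apply antichain_seq_sub_proj; induction l as [|a l IH]; simpl.
  - apply antichain_seq_nil.
  - apply antichain_seq_cons_inv in Hl as [Hl Ha].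
    destruct (excluded_middle_informative (P a)); simpl; auto.
    apply antichain_seq_cons; auto.
    intros y Hy; apply Ha; eapply in_sub_filter; eauto.
Qed.

Definition sub_width {A : Type} (le : A -> A -> Prop) (P : A -> Prop) (b : Ord) : Prop :=
  has_width (sub_le le P) b.

Lemma sub_width_oeq {A : Type} (le : A -> A -> Prop) (P : A -> Prop) (b c : Ord) :
  sub_width le P b -> oeq b c -> sub_width le P c.
Proof. intros [r [Hr Hb]] Hbc; exists r; split; auto; eapply oeq_trans; eauto. Qed.

Section SubsetWidths.

Variables (A : Type) (le : A -> A -> Prop).

Lemma rank_sub_filter_olt (P Q : A -> Prop) (rQ : list {x | Q x} -> Ord) :
  is_rank_fn (sub_le le Q) rQ ->
  forall (s : list {x | P x}) (x : {x | P x}), Q (proj1_sig x) ->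
  antichain_seq (sub_le le P) (s ++ [x]) ->
  olt (rQ (sub_filter Q (map (@proj1_sig _ _) (s ++ [x]))))
      (rQ (sub_filter Q (map (@proj1_sig _ _) s))).
Proof.
  intros HrQ s x Hx Hsx.
  apply antichain_seq_sub_proj, (antichain_seq_sub_filter _ Q) in Hsx.
  rewrite map_app, sub_filter_app in *; change (map _ [x]) with [proj1_sig x] in *.
  destruct (sub_filter_in Q _ Hx) as [h Eh]; rewrite Eh in *.
  now apply (rank_olt_child _ _ _ HrQ).
Qed.

Lemma sub_width_mono (P Q : A -> Prop) (b c : Ord) :
  (forall x, P x -> Q x) -> sub_width le P b -> sub_width le Q c -> ole b c.
Proof.
  intros HPQ [rP [HrP [_ Hb]]] [rQ [HrQ [Hc _]]].
  eapply ole_trans; [exact Hb|]; eapply ole_trans; [|exact Hc].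
  apply (rank_le_decreasing _ _ _ HrP (fun s => rQ (sub_filter Q (map (@proj1_sig _ _) s)))).
  - intros s x; apply (rank_sub_filter_olt P Q _ HrQ), HPQ, proj2_sig.
  - apply antichain_seq_nil.
Qed.

Lemma sub_width_full (w b : Ord) : has_width le w -> sub_width le (fun _ => True) b -> oeq b w.
Proof.
  intros [rA [HrA [HA1 HA2]]] [rT [HrT [HT1 HT2]]]; split.
  - eapply ole_trans; [exact HT2|]; eapply ole_trans; [|exact HA1].
    apply (rank_le_decreasing _ _ _ HrT (fun s => rA (map (@proj1_sig _ _) s)));
      [|apply antichain_seq_nil].
    intros s x Hsx; apply antichain_seq_sub_proj in Hsx; rewrite map_app in *.
    now apply (rank_olt_child _ _ _ HrA).
  - eapply ole_trans; [exact HA2|]; eapply ole_trans; [|exact HT1].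
    apply (rank_le_decreasing _ _ _ HrA (fun s => rT (sub_filter (fun _ => True) s)));
      [|apply antichain_seq_nil].
    intros s x Hsx; apply (antichain_seq_sub_filter _ (fun _ => True)) in Hsx.
    rewrite sub_filter_app in *; destruct (sub_filter_in (fun _ : A => True) x I) as [h Eh].
    rewrite Eh in *; now apply (rank_olt_child _ _ _ HrT).
Qed.

Lemma sub_width_empty (P : A -> Prop) (b : Ord) :
  (forall x, ~ P x) -> sub_width le P b -> ole b ozero.
Proof.
  intros HP [r [Hr [_ Hb]]]; eapply ole_trans; [exact Hb|].
  apply (rank_le_decreasing _ _ _ Hr (fun _ => ozero)); [|apply antichain_seq_nil].
  intros s x _; exfalso; exact (HP _ (proj2_sig x)).
Qed.

Lemma sub_width_chain (P : A -> Prop) (b : Ord) :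
  (forall x y, P x -> P y -> le x y \/ le y x) -> sub_width le P b -> ole b (ofin 1).
Proof.
  intros HP [r [Hr [_ Hb]]]; eapply ole_trans; [exact Hb|].
  apply (rank_le_decreasing _ _ _ Hr (fun s => match s with [] => ofin 1 | _ => ozero end));
    [|apply antichain_seq_nil].
  intros [|y s] x Hs.
  - apply (olt_osup_le _ _ _ tt), ole_refl.
  - exfalso; apply antichain_seq_cons_inv in Hs as [_ Hs].
    destruct (Hs x) as [Hyx Hxy]; [apply in_or_app; simpl; auto|].
    destruct (HP _ _ (proj2_sig y) (proj2_sig x)); auto.
Qed.

Hypothesis tree_wf : forall s : list A, Acc (is_child le) s.

Lemma sub_width_exists (P : A -> Prop) : exists b, sub_width le P b.
Proof.
  destruct (acc_rank_exists (sub_le le P)) as [r Hr].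
  2: exists (r []), r; split; auto; split; apply ole_refl.
  intros s; apply (Acc_incl _ _ (fun t u => is_child le (map (@proj1_sig _ _) t)
                                                       (map (@proj1_sig _ _) u))).
  - intros t u [Ht [x ->]]; split; [now apply antichain_seq_sub_proj|].
    exists (proj1_sig x); apply map_app.
  - apply Acc_inverse_image, tree_wf.
Qed.

(* An antichain sequence of [R] splits into its [P]-part and its [~P /\ Q]-part,
   and a child grows exactly one of them. *)
Lemma sub_width_union (R P Q : A -> Prop) (r b c : Ord) :
  (forall x, R x -> P x \/ Q x) ->
  sub_width le R r -> sub_width le P b -> sub_width le Q c -> ole r (nsum b c).
Proof.
  intros HR [rR [HrR [_ Hr]]] [rP [HrP [Hb _]]] HQ.
  set (Q' := fun x => ~ P x /\ Q x).
  destruct (sub_width_exists Q') as [d Hd].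
  assert (Hdc : ole d c) by (eapply sub_width_mono; [|exact Hd|exact HQ]; now intros x []).
  destruct Hd as [rQ [HrQ [Hd _]]].
  eapply ole_trans; [exact Hr|].
  eapply ole_trans; [|apply nsum_mono; [exact Hb|eapply ole_trans; [exact Hd|exact Hdc]]].
  apply (rank_le_decreasing _ _ _ HrR
           (fun s => nsum (rP (sub_filter P (map (@proj1_sig _ _) s)))
                          (rQ (sub_filter Q' (map (@proj1_sig _ _) s)))));
    [|apply antichain_seq_nil].
  intros s x Hsx.
  assert (Hunchanged : forall S : A -> Prop, ~ S (proj1_sig x) ->
            sub_filter S (map (@proj1_sig _ _) (s ++ [x])) = sub_filter S (map (@proj1_sig _ _) s)).
  { intros S HS; rewrite map_app, sub_filter_app; change (map _ [x]) with [proj1_sig x].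
    now rewrite (sub_filter_out S _ HS), app_nil_r. }
  destruct (classic (P (proj1_sig x))) as [Hp|Hp].
  - rewrite (Hunchanged Q') by (now intros []).
    apply nsum_olt_l, (rank_sub_filter_olt R P _ HrP); auto.
  - rewrite (Hunchanged P) by exact Hp.
    apply nsum_olt_r, (rank_sub_filter_olt R Q' _ HrQ); auto.
    split; auto; destruct (HR _ (proj2_sig x)); tauto.
Qed.

End SubsetWidths.

Lemma not_acc_descending {T : Type} (R : T -> T -> Prop) (x : T) :
  ~ Acc R x -> exists f : nat -> T, f 0 = x /\ forall n, R (f (S n)) (f n).
Proof.
  intros Hx.
  assert (step : forall z : {z | ~ Acc R z},
             {y : {y | ~ Acc R y} | R (proj1_sig y) (proj1_sig z)}).
  { intros [z Hz]; apply constructive_indefinite_description.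
    apply NNPP; intros Hn; apply Hz; constructor; intros y Hy.
    apply NNPP; intros Hy'; apply Hn; now exists (exist _ y Hy'). }
  set (g := fix g n := match n with 0 => exist _ x Hx | S k => proj1_sig (step (g k)) end).
  exists (fun n => proj1_sig (g n)); split; [reflexivity|].
  intros n; exact (proj2_sig (step (g n))).
Qed.

Lemma wqo_strict_wf {A : Type} (le : A -> A -> Prop) :
  wqo le -> well_founded (fun y x => le y x /\ ~ le x y).
Proof.
  intros [[_ Htr] Hgood] x; apply NNPP; intros Hx.
  destruct (not_acc_descending _ _ Hx) as (f & _ & Hf).
  assert (Hdesc : forall i j, i < j -> le (f j) (f i) /\ ~ le (f i) (f j)).
  { induction 1 as [|j Hij [IH1 IH2]]; [apply Hf|].
    destruct (Hf j) as [H1 H2]; split; eauto. }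
  destruct (Hgood f) as (i & j & Hij & Hle); exact (proj2 (Hdesc i j Hij) Hle).
Qed.

Lemma wqo_minimal {A : Type} (le : A -> A -> Prop) (P : A -> Prop) :
  wqo le -> (exists x, P x) -> exists m, P m /\ forall y, le y m -> ~ le m y -> ~ P y.
Proof.
  intros Hwqo [x Px]; induction (wqo_strict_wf le Hwqo x) as [x _ IH].
  destruct (classic (exists y, (le y x /\ ~ le x y) /\ P y)) as [[y [Hyx Py]]|Hmin].
  - exact (IH y Hyx Py).
  - exists x; split; auto; intros y Hyx Hxy Py; apply Hmin; eauto.
Qed.

Definition small_downset {A : Type} (le : A -> A -> Prop) (a : Ord) (x : A) : Prop :=
  exists b, sub_width le (fun y => le y x) b /\ olt b a.

Section Transfer.

Variables (A : Type) (le : A -> A -> Prop).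
Hypothesis tree_wf : forall s : list A, Acc (is_child le) s.
Variable a : Ord.
Hypotheses (a_closed : nsum_closed a) (a_pos : olt ozero a).

Lemma sub_width_downsets_olt (xs : list A) :
  (forall x, In x xs -> small_downset le a x) ->
  forall e, sub_width le (fun y => exists x, In x xs /\ le y x) e -> olt e a.
Proof.
  induction xs as [|x xs IH]; intros Hxs e He.
  - eapply ole_olt_trans; [|exact a_pos].
    eapply sub_width_empty; [|exact He]; now intros y (z & [] & _).
  - destruct (Hxs x (or_introl eq_refl)) as [b [Hb Hba]].
    destruct (sub_width_exists _ _ tree_wf (fun y => exists x, In x xs /\ le y x)) as [e' He'].
    assert (He'a : olt e' a) by (apply IH; auto; intros z Hz; apply Hxs; now right).
    eapply ole_olt_trans; [|exact (a_closed _ _ Hba He'a)].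
    eapply (sub_width_union _ _ tree_wf); [|exact He|exact Hb|exact He'].
    intros y (z & [<-|Hz] & Hyz); [left|right]; eauto.
Qed.

Lemma transferable_of_small_downsets (C : A -> Prop) :
  sub_width le C a -> (forall x, C x -> small_downset le a x) -> transferable le C.
Proof.
  intros HC Hsmall; exists a; split; auto; intros xs Hxs.
  destruct (sub_width_exists _ _ tree_wf (fun y => C y /\ forall x, In x xs -> ~ le y x))
    as [b Hb].
  apply (sub_width_oeq _ _ b); auto; split.
  - eapply sub_width_mono; [|exact Hb|exact HC]; now intros y [].
  - destruct (ole_or_olt a b) as [|Hba]; auto; exfalso.
    destruct (sub_width_exists _ _ tree_wf (fun y => exists x, In x xs /\ le y x)) as [e He].
    assert (Hea : olt e a) by (apply (sub_width_downsets_olt xs); auto).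
    apply (olt_irrefl a); eapply ole_olt_trans; [|exact (a_closed _ _ Hba Hea)].
    eapply (sub_width_union _ _ tree_wf); [|exact HC|exact Hb|exact He].
    intros y Cy; destruct (classic (exists x, In x xs /\ le y x)) as [Hy|Hy]; [now right|left].
    split; auto; intros x Hin Hle; apply Hy; eauto.
Qed.

End Transfer.

Section Core.

Variables (A : Type) (le : A -> A -> Prop) (w : Ord).
Hypotheses (le_wqo : wqo le) (le_width : has_width le w).
Hypotheses (w_closed : nsum_closed w) (one_lt_w : olt (ofin 1) w).

Let tree_wf := has_width_acc le w le_width.

Lemma sub_width_strict_downset (m : A) :
  ~ small_downset le w m -> sub_width le (fun y => le y m /\ ~ le m y) w.
Proof.
  intros Hlarge; destruct le_wqo as [[_ Htr] _].
  destruct (sub_width_exists _ _ tree_wf (fun y => le y m /\ ~ le m y)) as [b Hb].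
  apply (sub_width_oeq _ _ b); auto; split.
  - destruct (sub_width_exists _ _ tree_wf (fun _ => True)) as [t Ht].
    eapply ole_trans; [exact (sub_width_mono _ _ _ _ _ _ (fun _ _ => I) Hb Ht)|].
    exact (proj1 (sub_width_full _ _ _ _ le_width Ht)).
  - destruct (ole_or_olt w b) as [|Hbw]; auto; exfalso.
    destruct (sub_width_exists _ _ tree_wf (fun y => le y m /\ le m y)) as [e He].
    assert (Hew : olt e w).
    { eapply ole_olt_trans; [|exact one_lt_w].
      eapply sub_width_chain; [|exact He]; intros x y [Hxm _] [_ Hmy]; eauto. }
    destruct (sub_width_exists _ _ tree_wf (fun y => le y m)) as [d Hd].
    destruct (ole_or_olt w d) as [Hwd|Hdw]; [|now apply Hlarge; exists d].
    apply (olt_irrefl w); eapply ole_olt_trans; [exact Hwd|].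
    eapply ole_olt_trans; [|exact (w_closed _ _ Hbw Hew)].
    eapply (sub_width_union _ _ tree_wf); [|exact Hd|exact Hb|exact He].
    intros y Hym; destruct (classic (le m y)); [right|left]; auto.
Qed.

Lemma exists_small_downsets_core :
  exists C, sub_width le C w /\ forall x, C x -> small_downset le w x.
Proof.
  destruct (classic (exists m, ~ small_downset le w m)) as [Hlarge|Hsmall].
  - destruct (wqo_minimal le _ le_wqo Hlarge) as (m & Hm & Hmin).
    exists (fun y => le y m /\ ~ le m y); split; [now apply sub_width_strict_downset|].
    intros y [Hym Hmy]; apply NNPP; exact (Hmin y Hym Hmy).
  - exists (fun _ => True); split.
    + destruct (sub_width_exists _ _ tree_wf (fun _ => True)) as [t Ht].
      apply (sub_width_oeq _ _ t); auto; exact (sub_width_full _ _ _ _ le_width Ht).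
    + intros x _; apply NNPP; eauto.
Qed.

End Core.

Theorem mainTheorem8 (A : Type) (le : A -> A -> Prop) (wA : Ord) :
  wqo le ->
  has_width le wA ->
  ole oomega wA ->
  add_indecomposable wA ->
  exists C : A -> Prop,
    has_width (sub_le le C) wA /\ transferable le C.
Proof.
  intros Hwqo Hw Homega [g Hg].
  assert (Hclosed : nsum_closed wA)
    by (eapply nsum_closed_oeq; [apply opow_nsum_closed|apply oeq_sym, Hg]).
  assert (Hone : olt (ofin 1) wA)
    by (apply (olt_ole_trans _ oomega); [apply (olt_osup_le _ _ ofin 1), ole_refl|exact Homega]).
  destruct (exists_small_downsets_core A le wA Hwqo Hw Hclosed Hone) as (C & HC & Hsmall).
  exists C; split; auto.
  apply (transferable_of_small_downsets _ _ (has_width_acc le wA Hw) wA); auto.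
  eapply olt_trans; [|exact Hone]; apply (olt_osup_le _ _ _ tt), ole_refl.
Qed.
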